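(* Let $n\ge3$, let $H$ be a non-trivial finitely generated abelian group, let $G$ be a group with a surjective homomorphism $\sigma\colon G\to S_n$, let $W=H\wr_\sigma G$, and let $\pi\colon W\to G$ be the canonical projection. Assume that every abelian normal subgroup of $W$ is contained in $H^n$, and that $P_\sigma=\ker\sigma$ is characteristic in $G$. Then $PW=\pi^{-1}(P_\sigma)\cong H^n\times P_\sigma$ is characteristic in $W$.
   Context: $H\wr_\sigma G=H^n\rtimes_\sigma G$ is the semidirect product in which $G$ acts on $H^n$ by permuting coordinates through $\sigma$: $g\cdot(h_1,\dots,h_n)=(h_{\sigma(g)(1)},\dots,h_{\sigma(g)(n)})$ (with the composition convention in $S_n$ making this a left action); $H^n$ is identified with $\{(\mathbf h,1)\}$ and $\pi(\mathbf h,g)=g$. *)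

(* Abstract (possibly infinite) groups are given by raw
   operations on a carrier type; the wreath product is built concretely. *)
From mathcomp Require Import all_boot all_order all_fingroup all_algebra.
Set Implicit Arguments. Unset Strict Implicit. Unset Printing Implicit Defensive.
Import GRing.Theory.
Local Open Scope ring_scope.

Section GroupNotions.
Variables (T : Type) (mul : T -> T -> T) (one : T) (inv : T -> T).

Definition is_group : Prop :=
  [/\ (forall x y z, mul x (mul y z) = mul (mul x y) z),
      (forall x, mul one x = x), (forall x, mul x one = x),
      (forall x, mul (inv x) x = one) & (forall x, mul x (inv x) = one)].

Definition is_subgroup (S : T -> Prop) : Prop :=
  [/\ S one, (forall x y, S x -> S y -> S (mul x y)) & (forall x, S x -> S (inv x))].

Definition is_normal (S : T -> Prop) : Prop :=
  is_subgroup S /\ forall g x, S x -> S (mul (mul (inv g) x) g).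

Definition is_abelian_set (S : T -> Prop) : Prop :=
  forall x y, S x -> S y -> mul x y = mul y x.

Definition is_automorphism (f : T -> T) : Prop :=
  bijective f /\ forall x y, f (mul x y) = mul (f x) (f y).

Definition is_characteristic (S : T -> Prop) : Prop :=
  forall f, is_automorphism f -> forall y, S y <-> exists2 x, S x & f x = y.

End GroupNotions.

Definition fin_generated (H : zmodType) : Prop :=
  exists s : seq H, forall h : H,
    exists c : 'I_(size s) -> int, h = \sum_(i < size s) s`_i *~ c i.

Section Wreath.
Variables (n : nat) (H : zmodType) (G : Type)
          (gmul : G -> G -> G) (gone : G) (ginv : G -> G)
          (sigma : G -> {perm 'I_n}).

(* W = H^n x| G, elements (h, g); g acts by (g.h)_i = h_(sigma g i).
   With mathcomp's convention (s * t) i = t (s i) this is a left action. *)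
Definition wtype := ({ffun 'I_n -> H} * G)%type.

Definition act (g : G) (h : {ffun 'I_n -> H}) : {ffun 'I_n -> H} :=
  [ffun i => h (sigma g i)].

Definition wmul (x y : wtype) : wtype :=
  ([ffun i => x.1 i + act x.2 y.1 i], gmul x.2 y.2).
Definition wone : wtype := ([ffun => 0], gone).
Definition winv (x : wtype) : wtype :=
  ([ffun i => - act (ginv x.2) x.1 i], ginv x.2).

Definition wproj (x : wtype) : G := x.2.

Definition baseHn (x : wtype) : Prop := x.2 = gone.

Definition Psigma (g : G) : Prop := sigma g = 1%g.
Definition PW (x : wtype) : Prop := Psigma (wproj x).

Definition dmul (x y : wtype) : wtype :=
  ([ffun i => x.1 i + y.1 i], gmul x.2 y.2).

End Wreath.

(* An automorphism of W maps the base H^n to an abelian normal subgroup, hence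
   into H^n by hypothesis; as the same holds for its inverse, it induces an
   automorphism psi of W / H^n = G with pi o phi = psi o pi.  Since P_sigma is
   characteristic in G, psi stabilises P_sigma, so phi stabilises
   PW = pi^-1(P_sigma).  On PW the action of G is trivial, so the wreath
   multiplication there is the direct-product one. *)

From mathcomp Require Import all_boot all_order all_fingroup all_algebra.
Set Implicit Arguments. Unset Strict Implicit. Unset Printing Implicit Defensive.
Import GRing.Theory.
Local Open Scope ring_scope.

Definition image_of (T : Type) (f : T -> T) (S : T -> Prop) (y : T) : Prop :=
  exists2 x, S x & f x = y.

Section GroupTheory.
Variables (T : Type) (mul : T -> T -> T) (one : T) (inv : T -> T).
Hypothesis T_group : is_group mul one inv.

Lemma mul_eq1_inv a b : mul a b = one -> a = inv b.
Proof. by case: T_group => mulA mul1 mulr1 _ mulV e; rewrite -[a]mulr1 -(mulV b) mulA e mul1. Qed.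

Lemma hom1 f : {morph f : x y / mul x y} -> f one = one.
Proof.
case: T_group => mulA mul1 mulr1 _ mulV fM.
have idem : mul (f one) (f one) = f one by rewrite -fM mul1.
by rewrite -[f one]mulr1 -{2}(mulV (f one)) mulA idem.
Qed.

Lemma homV f : {morph f : x y / mul x y} -> {morph f : x / inv x}.
Proof.
move=> fM x; apply: mul_eq1_inv; rewrite -fM.
by case: T_group => _ _ _ mulVx _; rewrite mulVx (hom1 fM).
Qed.

Lemma automorphism_inverse f : is_automorphism mul f ->
  exists g, [/\ is_automorphism mul g, cancel f g & cancel g f].
Proof.
case=> [[g fK gK] fM]; exists g; split=> //; split; first by exists f.
by move=> x y; apply: (can_inj fK); rewrite fM !gK.
Qed.

Lemma image_normal f S : is_automorphism mul f -> is_normal mul one inv S ->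
  is_normal mul one inv (image_of f S).
Proof.
move=> fA [[S1 SM SV] SJ]; have [g [_ _ gK]] := automorphism_inverse fA.
have fM := fA.2; split; first split.
- by exists one; rewrite ?(hom1 fM).
- by move=> _ _ [a Sa <-] [b Sb <-]; exists (mul a b); [apply: SM | apply: fM].
- by move=> _ [a Sa <-]; exists (inv a); [apply: SV | apply: homV].
move=> h _ [a Sa <-]; exists (mul (mul (inv (g h)) a) (g h)); first exact: SJ.
by rewrite !fM (homV fM) gK.
Qed.

Lemma image_abelian f S : {morph f : x y / mul x y} -> is_abelian_set mul S ->
  is_abelian_set mul (image_of f S).
Proof. by move=> fM SC _ _ [a Sa <-] [b Sb <-]; rewrite -!fM SC. Qed.

End GroupTheory.

Lemma preimage_characteristic (T U : Type) (mulT : T -> T -> T) (mulU : U -> U -> U)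
    (p : T -> U) (S : U -> Prop) :
  is_characteristic mulU S ->
  (forall phi, is_automorphism mulT phi ->
     exists2 psi, is_automorphism mulU psi & forall x, p (phi x) = psi (p x)) ->
  is_characteristic mulT (fun x => S (p x)).
Proof.
move=> Schar aut_factor phi phiA y.
have [psi psiA phi_p] := aut_factor phi phiA.
have [[phinv phiK phinvK] _] := phiA.
have [[psinv psiK _] _] := psiA.
split=> [Spy | [x Spx <-]]; last by rewrite phi_p; apply/(Schar psi psiA); exists (p x).
have [g Sg psig] := (Schar psi psiA (p y)).1 Spy.
exists (phinv y); last exact: phinvK.
by rewrite -(psiK (p _)) -phi_p phinvK -psig psiK.
Qed.

Section WreathProduct.
Variables (n : nat) (H : zmodType) (G : Type)
          (gmul : G -> G -> G) (gone : G) (ginv : G -> G)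
          (sigma : G -> {perm 'I_n}).
Hypothesis G_group : is_group gmul gone ginv.
Hypothesis sigmaM : forall a b, sigma (gmul a b) = (sigma a * sigma b)%g.

Local Notation W := (wtype n H G).
Local Notation wmul := (wmul (H:=H) gmul sigma).
Local Notation wone := (wone n H gone).
Local Notation winv := (winv (H:=H) ginv sigma).
Local Notation baseHn := (baseHn (n:=n) (H:=H) gone).

Lemma sigma1 : sigma gone = 1%g.
Proof.
by case: G_group => _ mul1 _ _ _; apply: (mulgI (sigma gone)); rewrite mulg1 -sigmaM mul1.
Qed.

Lemma wreath_group : is_group wmul wone winv.
Proof.
case: G_group => mulA mul1 mulr1 mulVg mulgV.
split=> [[x1 x2] [y1 y2] [z1 z2] | [x1 x2] | [x1 x2] | [x1 x2] | [x1 x2]];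
  rewrite /wmul /wone /winv /=; congr (_, _); rewrite ?mulA ?mul1 ?mulr1 ?mulVg ?mulgV //;
  apply/ffunP=> i; rewrite /act !ffunE ?addrA ?addr0 ?addNr //.
- by rewrite sigmaM permM.
- by rewrite sigma1 perm1 add0r.
- by rewrite -permM -sigmaM mulgV sigma1 perm1 subrr.
Qed.

Lemma baseHn_normal : is_normal wmul wone winv baseHn.
Proof.
have ginv1 : ginv gone = gone.
  by case: G_group => _ mul1 _ _ mulgV; rewrite -{1}(mul1 (ginv gone)) mulgV.
case: G_group => _ mul1 mulr1 mulVg _.
split; first split=> //.
- by move=> x y; rewrite /baseHn /= => -> ->; rewrite mul1.
- by move=> x; rewrite /baseHn /= => ->.
by move=> g x; rewrite /baseHn /= => ->; rewrite mulr1 mulVg.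
Qed.

Lemma baseHn_abelian : is_abelian_set wmul baseHn.
Proof.
move=> [x1 x2] [y1 y2]; rewrite /baseHn /= => -> ->.
rewrite /wmul /=; congr (_, _); apply/ffunP=> i.
by rewrite /act !ffunE sigma1 perm1 addrC.
Qed.

Lemma PW_wmul x y : PW sigma x -> wmul x y = dmul gmul x y.
Proof.
move=> PWx; rewrite /wmul /dmul; congr (_, _); apply/ffunP=> i.
by rewrite /act !ffunE PWx perm1.
Qed.

Definition wlift (g : G) : W := ([ffun => 0], g).

Definition induced_aut (phi : W -> W) (g : G) : G := (phi (wlift g)).2.

Lemma wreath_decomp x : x = wmul (x.1, gone) (wlift x.2).
Proof.
case: G_group => _ mul1 _ _ _; case: x => x1 x2.
by rewrite /wmul /=; congr (_, _); [apply/ffunP=> i; rewrite /act !ffunE addr0 | rewrite mul1].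
Qed.

Lemma wproj_induced phi : {morph phi : x y / wmul x y} ->
    (forall x, baseHn x -> baseHn (phi x)) ->
  forall x, wproj (phi x) = induced_aut phi (wproj x).
Proof.
move=> phiM phi_base x; rewrite {1}[x]wreath_decomp phiM /=.
by rewrite (phi_base (x.1, gone)) //; case: G_group => _ mul1 _ _ _; rewrite mul1.
Qed.

Hypothesis abelian_normal_sub_baseHn : forall S : W -> Prop,
  is_normal wmul wone winv S -> is_abelian_set wmul S -> forall x, S x -> baseHn x.

Lemma baseHn_stable phi : is_automorphism wmul phi ->
  forall x, baseHn x -> baseHn (phi x).
Proof.
move=> phiA x base_x; apply: (abelian_normal_sub_baseHn (S := image_of phi baseHn)).
- exact: (image_normal wreath_group phiA baseHn_normal).
- exact: (image_abelian phiA.2 baseHn_abelian).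
- by exists x.
Qed.

Lemma induced_automorphism phi : is_automorphism wmul phi ->
  is_automorphism gmul (induced_aut phi).
Proof.
move=> phiA; have [phinv [phinvA phiK phinvK]] := automorphism_inverse phiA.
have phi_proj := wproj_induced phiA.2 (baseHn_stable phiA).
have phinv_proj := wproj_induced phinvA.2 (baseHn_stable phinvA).
split.
  exists (induced_aut phinv) => g.
    by have := phinv_proj (phi (wlift g)); rewrite phiK; apply: esym.
  by have := phi_proj (phinv (wlift g)); rewrite phinvK; apply: esym.
move=> a b; rewrite /induced_aut.
have -> : wlift (gmul a b) = wmul (wlift a) (wlift b).
  by rewrite /wmul /=; congr (_, _); apply/ffunP=> i; rewrite /act !ffunE addr0.
by rewrite phiA.2.
Qed.

Lemma wproj_automorphism_factor phi : is_automorphism wmul phi ->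
  exists2 psi, is_automorphism gmul psi & forall x, wproj (phi x) = psi (wproj x).
Proof.
move=> phiA; exists (induced_aut phi); first exact: induced_automorphism.
exact: (wproj_induced phiA.2 (baseHn_stable phiA)).
Qed.

End WreathProduct.

Theorem theorem3p17
  (n : nat) (hn : (3 <= n)%N)
  (H : zmodType) (H_fg : fin_generated H) (H_nontriv : exists h : H, h != 0)
  (G : Type) (gmul : G -> G -> G) (gone : G) (ginv : G -> G)
  (G_group : is_group gmul gone ginv)
  (sigma : G -> {perm 'I_n})
  (sigma_hom : forall a b, sigma (gmul a b) = (sigma a * sigma b)%g)
  (sigma_surj : forall s : {perm 'I_n}, exists g, sigma g = s)
  (hAbNormal : forall S : wtype n H G -> Prop,
      is_normal (wmul (H:=H) gmul sigma) (wone n H gone) (winv ginv sigma) S ->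
      is_abelian_set (wmul (H:=H) gmul sigma) S ->
      forall x, S x -> baseHn gone x)
  (hPchar : is_characteristic gmul (Psigma sigma)) :
  (exists f : wtype n H G -> wtype n H G,
     [/\ forall x, PW sigma x -> Psigma sigma (f x).2,
         forall y, Psigma sigma y.2 -> exists! x, PW sigma x /\ f x = y
       & forall x y, PW sigma x -> PW sigma y ->
           f (wmul gmul sigma x y) = dmul gmul (f x) (f y)])
  /\ is_characteristic (wmul (H:=H) gmul sigma) (PW (H:=H) sigma).
Proof.
split.
  exists id; split=> // [y PWy | x y PWx _]; last exact: PW_wmul.
  by exists y; split=> // x [].
exact: (preimage_characteristic hPchar (wproj_automorphism_factor G_group sigma_hom hAbNormal)).
Qed.
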